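(* Let $\Pi$ be a finite, satisfiable set of linear constraints over $x_1,\dots,x_D$ and $\mathrm{CL}$ the constraint layer built from $\Pi$ and the ordering $x_1,\dots,x_D$. Then for every $\tilde x\in\mathbb{R}^D$ and every $i=1,\dots,D$ we have $ub_i\ge lb_i$, and moreover $\mathrm{CL}(\tilde x)_i=\min^i(\max^i(\tilde x_i,lb_i),ub_i)=\max^i(\min^i(\tilde x_i,ub_i),lb_i)$.
   Context: A constraint is a linear inequality $\phi:\ \sum_{k=1}^D w_k x_k + b \unrhd 0$ with $w_k,b\in\mathbb{R}$ and $\unrhd\in\{\ge,>\}$; it is strict if $\unrhd$ is $>$. A point $\tilde x\in\mathbb{R}^D$ satisfies $\phi$ if $\sum_k w_k\tilde x_k+b\unrhd 0$, and satisfies a set $\Pi$ if it satisfies every member; $\Pi$ is satisfiable if some point satisfies it. Variable $x_j$ appears positively (resp. negatively) in $\phi$ if $w_j>0$ (resp. $w_j<0$). For a set $\Gamma$ of constraints, $\Gamma^+_j$ (resp. $\Gamma^-_j$) is the subset in which $x_j$ appears positively (resp. negatively). Reduction: for $\phi^1=\sum_k w^1_kx_k+b^1\unrhd^1 0\in\Gamma^-_j$ and $\phi^2=\sum_k w^2_kx_k+b^2\unrhd^2 0\in\Gamma^+_j$, $red_j(\phi^1,\phi^2)$ is $\sum_{k\ne j}(w^1_k|w^2_j|+w^2_k|w^1_j|)x_k + b^1|w^2_j|+b^2|w^1_j| \unrhd 0$, where $\unrhd$ is $\ge$ if both $\unrhd^1,\unrhd^2$ are $\ge$, and $>$ otherwise.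 Sets $\Pi_i$: $\Pi_D=\Pi$, and for $i<D$, with $j=i+1$, $\Pi_i=(\Pi_j\setminus(\Pi^-_j\cup\Pi^+_j))\cup\{red_j(\phi^1,\phi^2):\phi^1\in\Pi^-_j,\phi^2\in\Pi^+_j\}$, where $\Pi^\pm_j$ means $(\Pi_j)^\pm_j$. (Thus only $x_1,\dots,x_i$ occur in $\Pi_i$; we write $\Pi_i^\pm$ for $(\Pi_i)^\pm_i$.) For $\phi=\sum_kw_kx_k+b\unrhd0$ with $w_i\neq0$, let $\varepsilon^\phi_i=-\sum_{k\ne i}(w_k/w_i)x_k-b/w_i$; for $\phi\in\Pi_i$ it depends only on $x_1,\dots,x_{i-1}$. Constraint layer: given $\tilde x\in\mathbb{R}^D$, $\mathrm{CL}(\tilde x)\in\mathbb{R}^D$ is computed coordinatewise for $i=1,\dots,D$. Let $\varepsilon^\phi_i(\mathrm{CL}(\tilde x))$ denote $\varepsilon^\phi_i$ evaluated at the already computed values $\mathrm{CL}(\tilde x)_1,\dots,\mathrm{CL}(\tilde x)_{i-1}$, and set $ub_i=\min\{\varepsilon^\phi_i(\mathrm{CL}(\tilde x)):\phi\in\Pi_i^-\}$, $lb_i=\max\{\varepsilon^\phi_i(\mathrm{CL}(\tilde x)):\phi\in\Pi_i^+\}$ (with $\min\emptyset=+\infty$, $\max\emptyset=-\infty$). Then $\mathrm{CL}(\tilde x)_i=\min^i(\max^i(\tilde x_i,lb_i),ub_i)$, where $\max^i(a,lb_i)$ equals $v=\max(a,lb_i)$ unless some strict $\phi\in\Pi_i^+$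 has $v=\varepsilon^\phi_i(\mathrm{CL}(\tilde x))$, in which case it equals $v+\epsilon$ for a chosen $\epsilon>0$ small enough that $lb_i+\epsilon< ub_i$; symmetrically $\min^i(a,ub_i)$ equals $u=\min(a,ub_i)$ unless some strict $\phi\in\Pi_i^-$ has $u=\varepsilon^\phi_i(\mathrm{CL}(\tilde x))$, in which case it equals $u-\epsilon$ for a chosen $\epsilon>0$ small enough that $ub_i-\epsilon>lb_i$ (the same $\epsilon$ choices being used on both sides of the displayed identity). *)

From HB Require Import structures.
From mathcomp Require Import all_boot all_order all_algebra.
From mathcomp Require Import constructive_ereal.
Set Implicit Arguments. Unset Strict Implicit. Unset Printing Implicit Defensive.
Import Order.TTheory GRing.Theory Num.Theory.
Local Open Scope ring_scope.

(* A linear constraint  sum_{k=1}^D w_k x_k + b |> 0.  Coordinates are indexed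
   1..D (as in the paper); points of R^D are functions nat -> R of which only
   the values at 1..D matter. *)
Record constr (R : realFieldType) := Constr {
  cw : nat -> R;
  cb : R;
  cstrict : bool }.     (* true: '>' ; false: '>=' *)

Definition cval (R : realFieldType) (D : nat) (phi : constr R) (x : nat -> R) : R :=
  \sum_(1 <= k < D.+1) cw phi k * x k + cb phi.

Definition sat (R : realFieldType) (D : nat) (x : nat -> R) (phi : constr R) : bool :=
  if cstrict phi then 0 < cval D phi x else 0 <= cval D phi x.

Definition satisfiable (R : realFieldType) (D : nat) (Pi : seq (constr R)) : Prop :=
  exists x : nat -> R, all (sat D x) Pi.

Definition posj (R : realFieldType) (j : nat) (G : seq (constr R)) :=
  [seq phi <- G | 0 < cw phi j].
Definition negj (R : realFieldType) (j : nat) (G : seq (constr R)) :=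
  [seq phi <- G | cw phi j < 0].

Definition red (R : realFieldType) (j : nat) (phi1 phi2 : constr R) : constr R :=
  Constr (fun k => if k == j then 0
                   else cw phi1 k * `|cw phi2 j| + cw phi2 k * `|cw phi1 j|)
         (cb phi1 * `|cw phi2 j| + cb phi2 * `|cw phi1 j|)
         (cstrict phi1 || cstrict phi2).

(* Pi_i = (Pi_j \ (Pi_j^- u Pi_j^+)) u { red_j phi1 phi2 }, j = i+1 *)
Definition elim (R : realFieldType) (j : nat) (G : seq (constr R)) : seq (constr R) :=
  [seq phi <- G | cw phi j == 0] ++
  [seq red j phi1 phi2 | phi1 <- negj j G, phi2 <- posj j G].

(* PiAux n = Pi_{D-n} *)
Fixpoint PiAux (R : realFieldType) (D : nat) (Pi : seq (constr R)) (n : nat)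
  : seq (constr R) :=
  match n with
  | 0 => Pi
  | n'.+1 => elim (D - n') (PiAux D Pi n')
  end.

Definition PiI (R : realFieldType) (D : nat) (Pi : seq (constr R)) (i : nat) :=
  PiAux D Pi (D - i).

Definition epsc (R : realFieldType) (D : nat) (i : nat) (phi : constr R)
  (y : nat -> R) : R :=
  - \sum_(1 <= k < D.+1 | k != i) (cw phi k / cw phi i) * y k - cb phi / cw phi i.

(* lb_i and ub_i, evaluated at the point y (the already computed prefix) *)
Definition lbI (R : realFieldType) (D : nat) (Pi : seq (constr R)) (i : nat)
  (y : nat -> R) : \bar R :=
  \big[Order.max/-oo%E]_(phi <- posj i (PiI D Pi i)) (epsc D i phi y)%:E.
Definition ubI (R : realFieldType) (D : nat) (Pi : seq (constr R)) (i : nat)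
  (y : nat -> R) : \bar R :=
  \big[Order.min/+oo%E]_(phi <- negj i (PiI D Pi i)) (epsc D i phi y)%:E.

Definition rmaxe (R : realFieldType) (a : R) (l : \bar R) : R :=
  match l with | r%:E => Num.max a r | +oo%E => a | -oo%E => a end.
Definition rmine (R : realFieldType) (a : R) (u : \bar R) : R :=
  match u with | r%:E => Num.min a r | +oo%E => a | -oo%E => a end.

Definition maxI (R : realFieldType) (D : nat) (Pi : seq (constr R)) (i : nat)
  (y : nat -> R) (e a : R) : R :=
  let v := rmaxe a (lbI D Pi i y) in
  if has (fun phi => cstrict phi && (v == epsc D i phi y)) (posj i (PiI D Pi i))
  then v + e else v.

Definition minI (R : realFieldType) (D : nat) (Pi : seq (constr R)) (i : nat)
  (y : nat -> R) (e a : R) : R :=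
  let u := rmine a (ubI D Pi i y) in
  if has (fun phi => cstrict phi && (u == epsc D i phi y)) (negj i (PiI D Pi i))
  then u - e else u.

(* clpre n : the vector (CL_1, ..., CL_n, 0, 0, ...); epsL i / epsU i are the
   epsilons chosen for max^i / min^i at coordinate i. *)
Fixpoint clpre (R : realFieldType) (D : nat) (Pi : seq (constr R)) (xt : nat -> R)
  (epsL epsU : nat -> R) (n : nat) : nat -> R :=
  match n with
  | 0 => fun _ => 0
  | n'.+1 =>
      let p := clpre D Pi xt epsL epsU n' in
      let v := minI D Pi n'.+1 p (epsU n'.+1) (maxI D Pi n'.+1 p (epsL n'.+1) (xt n'.+1)) in
      fun k => if k == n'.+1 then v else p k
  end.

Definition CL (R : realFieldType) (D : nat) (Pi : seq (constr R)) (xt : nat -> R)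
  (epsL epsU : nat -> R) : nat -> R :=
  clpre D Pi xt epsL epsU D.

Definition eps_ok (R : realFieldType) (D : nat) (Pi : seq (constr R)) (xt : nat -> R)
  (epsL epsU : nat -> R) : Prop :=
  forall i, (1 <= i <= D)%N ->
    let p := clpre D Pi xt epsL epsU i.-1 in
    let lb := lbI D Pi i p in
    let ub := ubI D Pi i p in
    0 < epsL i /\ 0 < epsU i /\
    ((lb < ub)%E -> (lb + (epsL i)%:E < ub)%E /\ (lb < ub - (epsU i)%:E)%E).

From HB Require Import structures.
From mathcomp Require Import all_boot all_order all_algebra.
From mathcomp Require Import constructive_ereal.
From mathcomp Require Import ring lra zify.
Import Order.TTheory GRing.Theory Num.Theory.
Local Open Scope ring_scope.
Set Implicit Arguments. Unset Strict Implicit. Unset Printing Implicit Defensive.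

(* Each constraint of [Pi_i] mentioning [x_i] is a lower bound (positive weight) or an upper
   bound (negative weight) [x_i >= eps] / [x_i > eps], where [eps] depends on [x_1..x_(i-1)].
   Suppose the already computed prefix satisfies [Pi_(i-1)].  Since [Pi_(i-1)] contains the
   Fourier-Motzkin combination of every lower bound with every upper bound, each lower bound lies
   below each upper bound, strictly if one of them is strict.  Hence [lb_i <= ub_i], and clamping
   into [[lb_i, ub_i]], pushed by [eps] off strict bounds, commutes with itself and satisfies every
   bound, so the prefix extended by [CL_i] satisfies [Pi_i].  The induction starts from [Pi_0],
   whose constraints are variable-free and are inherited from [Pi] by every elimination step. *)

Section ExtendedMinMax.
Variable R : realFieldType.
Implicit Types (a x : R) (L U y : \bar R).

Lemma rmaxe_id a L : (L < a%:E)%E -> rmaxe a L = a.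
Proof. by case: L => [r||] //=; rewrite lte_fin => /ltW ra; rewrite max_l. Qed.

Lemma rmine_id a U : (a%:E < U)%E -> rmine a U = a.
Proof. by case: U => [r||] //=; rewrite lte_fin => /ltW ar; rewrite min_l. Qed.

Lemma le_rmaxe a L : (L < +oo)%E -> (L <= (rmaxe a L)%:E)%E.
Proof. by case: L => [r||] //= _; rewrite ?leNye // lee_fin le_max lexx orbT. Qed.

Lemma rmine_le a U : (-oo < U)%E -> ((rmine a U)%:E <= U)%E.
Proof. by case: U => [r||] //= _; rewrite ?leey // lee_fin ge_min lexx orbT. Qed.

Lemma rmaxe_lt a L y : (L < y)%E -> (a%:E < y)%E -> ((rmaxe a L)%:E < y)%E.
Proof. by case: L => [r||] //= ry ay; rewrite EFin_max gt_max ry ay. Qed.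

Lemma rmine_gt a U y : (y < U)%E -> (y < a%:E)%E -> (y < (rmine a U)%:E)%E.
Proof. by case: U => [r||] //= yr ya; rewrite EFin_min lt_min yr ya. Qed.

End ExtendedMinMax.

Section Clamp.
Variable R : realFieldType.
Implicit Types (lo up : seq (R * bool)) (l u : R * bool) (a v x e : R).

(* A bound [(r, s)] on a variable is [r] itself, strict iff [s]; [lo] collects lower bounds and
   [up] upper bounds. *)

Definition lbound lo : \bar R := \big[Order.max/-oo%E]_(l <- lo) l.1%:E.
Definition ubound up : \bar R := \big[Order.min/+oo%E]_(u <- up) u.1%:E.

Definition clamp_lo lo e a : R :=
  let v := rmaxe a (lbound lo) in if (v, true) \in lo then v + e else v.
Definition clamp_up up e a : R :=
  let u := rmine a (ubound up) in if (u, true) \in up then u - e else u.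

Definition respects_lo l x : bool := if l.2 then l.1 < x else l.1 <= x.
Definition respects_up u x : bool := if u.2 then x < u.1 else x <= u.1.
Definition bound_compat l u : bool := if l.2 || u.2 then l.1 < u.1 else l.1 <= u.1.

Lemma lbound_lt_pinfty lo : (lbound lo < +oo)%E.
Proof. by apply: bigmax_lt => // l _; exact: ltry. Qed.

Lemma ubound_gt_ninfty up : (-oo < ubound up)%E.
Proof. by apply: lt_bigmin => // u _; exact: ltNyr. Qed.

Lemma lbound_ge lo l : l \in lo -> (l.1%:E <= lbound lo)%E.
Proof. by move=> lin; exact: (le_bigmax_seq _ _ _ _ lin). Qed.

Lemma ubound_le up u : u \in up -> (ubound up <= u.1%:E)%E.
Proof. by move=> uin; exact: (ge_bigmin_seq _ _ _ _ uin). Qed.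

Lemma clamp_lo_respects lo e a : 0 < e -> all (respects_lo^~ (clamp_lo lo e a)) lo.
Proof.
move=> e_gt0; apply/allP => -[r s] lin; rewrite /clamp_lo /respects_lo /=.
set v := rmaxe a _; have rv : r <= v.
  by rewrite -lee_fin (le_trans (lbound_ge lin)) // le_rmaxe // lbound_lt_pinfty.
case: s lin => lin; case: ifPn => [_|vlo]; try lra.
by rewrite lt_neqAle rv andbT; apply: contraNneq vlo => <-.
Qed.

Lemma clamp_up_respects up e a : 0 < e -> all (respects_up^~ (clamp_up up e a)) up.
Proof.
move=> e_gt0; apply/allP => -[r s] uin; rewrite /clamp_up /respects_up /=.
set u := rmine a _; have ur : u <= r.
  by rewrite -lee_fin (le_trans _ (ubound_le uin)) // rmine_le // ubound_gt_ninfty.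
case: s uin => uin; case: ifPn => [_|uup]; try lra.
by rewrite lt_neqAle ur andbT; apply: contraNneq uup => ->.
Qed.

Definition eps_fit lo up e e' : Prop := (lbound lo < ubound up)%E ->
  (lbound lo + e%:E < ubound up)%E /\ (lbound lo < ubound up - e'%:E)%E.

Variables (lo up : seq (R * bool)) (e e' : R).
Local Notation lb := (lbound lo).
Local Notation ub := (ubound up).
Hypothesis compat : allrel bound_compat lo up.
Hypothesis eps_small : eps_fit lo up e e'.

Lemma lbound_le_ubound : (lb <= ub)%E.
Proof.
rewrite /lbound big_seq; apply: bigmax_le => [|l lin]; first exact: leNye.
rewrite /ubound big_seq; apply: le_bigmin => [|u uin]; first exact: leey.
by have := allrelP compat l u lin uin; rewrite /bound_compat lee_fin; case: ifP => // _ /ltW.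
Qed.

Lemma strict_lo_lt_ubound v : (v, true) \in lo -> (v%:E < ub)%E.
Proof.
move=> vin; rewrite /ubound big_seq; apply: lt_bigmin => [|u uin]; first exact: ltry.
by have := allrelP compat _ u vin uin.
Qed.

Lemma strict_up_gt_lbound v : (v, true) \in up -> (lb < v%:E)%E.
Proof.
move=> vin; rewrite /lbound big_seq; apply: bigmax_lt => [|l lin]; first exact: ltNyr.
by have := allrelP compat l _ lin vin; rewrite /bound_compat orbT.
Qed.

Lemma clamp_lo_id a : (lb < a%:E)%E -> clamp_lo lo e a = a.
Proof.
move=> lba; rewrite /clamp_lo rmaxe_id //; case: ifP => // /lbound_ge /=.
by rewrite leNgt lba.
Qed.

Lemma clamp_up_id a : (a%:E < ub)%E -> clamp_up up e' a = a.
Proof.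
move=> aub; rewrite /clamp_up rmine_id //; case: ifP => // /ubound_le /=.
by rewrite leNgt aub.
Qed.

Lemma clamp_lo_lt_ubound a : (lb < ub)%E -> (a%:E < ub)%E -> ((clamp_lo lo e a)%:E < ub)%E.
Proof.
move=> lbub aub; rewrite /clamp_lo; set v := rmaxe a lb.
case: ifP => [vlo|_]; last exact: rmaxe_lt.
have vlb : v%:E = lb.
  by apply/le_anti/andP; split; [exact: (lbound_ge vlo) | exact/le_rmaxe/lbound_lt_pinfty].
by rewrite EFinD vlb; case: (eps_small lbub).
Qed.

Lemma clamp_up_gt_lbound a : (lb < ub)%E -> (lb < a%:E)%E -> (lb < (clamp_up up e' a)%:E)%E.
Proof.
move=> lbub lba; rewrite /clamp_up; set u := rmine a ub.
case: ifP => [uup|_]; last exact: rmine_gt.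
have uub : u%:E = ub.
  by apply/le_anti/andP; split; [exact/rmine_le/ubound_gt_ninfty | exact: (ubound_le uup)].
by rewrite EFinB uub; case: (eps_small lbub).
Qed.

Lemma clamp_lo_tight a m : lb = m%:E -> ub = m%:E -> clamp_lo lo e a = Num.max a m.
Proof.
move=> lbm ubm; rewrite /clamp_lo lbm /=; case: ifP => // /strict_lo_lt_ubound.
by rewrite ubm lte_fin ltNge le_max lexx orbT.
Qed.

Lemma clamp_up_tight a m : lb = m%:E -> ub = m%:E -> clamp_up up e' a = Num.min a m.
Proof.
move=> lbm ubm; rewrite /clamp_up ubm /=; case: ifP => // /strict_up_gt_lbound.
by rewrite lbm lte_fin ltNge ge_min lexx orbT.
Qed.

Lemma clamp_commute a :
  clamp_up up e' (clamp_lo lo e a) = clamp_lo lo e (clamp_up up e' a).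
Proof.
(* If [lb < ub], both sides equal [clamp_lo a] when [a < ub] and [clamp_up a] otherwise. *)
have := lbound_le_ubound; rewrite le_eqVlt => /orP[/eqP lb_ub | lbub].
  have [m lbm] : exists m, lb = m%:E.
    move: lb_ub (lbound_lt_pinfty lo) (ubound_gt_ninfty up).
    case: (lbound lo) => [r _ _ _|//|<- //]; by exists r.
  have ubm : ub = m%:E by rewrite -lb_ub.
  rewrite !(clamp_lo_tight _ lbm ubm) !(clamp_up_tight _ lbm ubm).
  by case: (leP a m) => am; rewrite ?(max_r am) ?(min_r (ltW am)) ?max_l ?min_l ?lexx.
have [aub | uba] := ltP a%:E ub.
  by rewrite !clamp_up_id // clamp_lo_lt_ubound.
have lba : (lb < a%:E)%E := lt_le_trans lbub uba.
by rewrite !clamp_lo_id // clamp_up_gt_lbound.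
Qed.

End Clamp.

Arguments respects_lo {R}.
Arguments respects_up {R}.
Arguments bound_compat {R}.

Lemma all_allpairs (S T U : Type) (P : pred U) (f : S -> T -> U) s t :
  all P [seq f x y | x <- s, y <- t] = allrel (fun x y => P (f x y)) s t.
Proof. by rewrite allrel_allpairsE -map_allpairs all_map. Qed.

Section Constraints.
Variables (R : realFieldType) (D : nat).
Implicit Types (phi a b : constr R) (y : nat -> R) (G : seq (constr R)).

Lemma cval_eps i phi y : (1 <= i <= D)%N -> cw phi i != 0 ->
  cval D phi y = cw phi i * (y i - epsc D i phi y).
Proof.
move=> iD wi; rewrite /cval /epsc (bigD1_seq i) /=; last first.
- exact: iota_uniq.
- by rewrite mem_index_iota; lia.
under [\sum_(_ <- _ | _) (_ / _ * _)]eq_bigr do rewrite mulrAC.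
by rewrite -mulr_suml; field.
Qed.

Lemma epsc_ext i phi y y' : (forall k, k != i -> y k = y' k) ->
  epsc D i phi y = epsc D i phi y'.
Proof. by move=> yy'; rewrite /epsc; congr (- _ - _); apply: eq_bigr => k /yy' ->. Qed.

Lemma sat_pos_weight i phi y : (1 <= i <= D)%N -> 0 < cw phi i ->
  sat D y phi = respects_lo (epsc D i phi y, cstrict phi) (y i).
Proof.
move=> iD wi; rewrite /sat /respects_lo (cval_eps _ iD (lt0r_neq0 wi)) /=.
by rewrite pmulr_rgt0 // pmulr_rge0 // subr_gt0 subr_ge0.
Qed.

Lemma sat_neg_weight i phi y : (1 <= i <= D)%N -> cw phi i < 0 ->
  sat D y phi = respects_up (epsc D i phi y, cstrict phi) (y i).
Proof.
move=> iD wi; rewrite /sat /respects_up (cval_eps _ iD (ltr0_neq0 wi)) /=.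
by rewrite nmulr_rgt0 // nmulr_rge0 // subr_lt0 subr_le0.
Qed.

Lemma cval_red j a b y : cw a j < 0 -> 0 < cw b j ->
  cval D (red j a b) y = `|cw b j| * cval D a y + `|cw a j| * cval D b y.
Proof.
move=> wa wb; rewrite /cval /= !mulrDr !mulr_sumr addrACA -big_split /=.
congr (_ + _); last ring.
(* at [k = j] the combination vanishes too, the two weights having opposite signs *)
apply: eq_bigr => k _; case: eqP => [->|_]; last ring.
rewrite gtr0_norm // ltr0_norm //; ring.
Qed.

Lemma sat_red j a b y : cw a j < 0 -> 0 < cw b j ->
  sat D y a -> sat D y b -> sat D y (red j a b).
Proof.
move=> wa wb; rewrite /sat cval_red //= gtr0_norm // ltr0_norm //.
by case: (cstrict a); case: (cstrict b) => /= ya yb; nra.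
Qed.

Lemma red_bound_compat j a b y : (1 <= j <= D)%N -> cw a j < 0 -> 0 < cw b j ->
  sat D y (red j a b) ->
  bound_compat (epsc D j b y, cstrict b) (epsc D j a y, cstrict a).
Proof.
move=> jD wa wb; rewrite /sat /bound_compat cval_red //= orbC.
rewrite (cval_eps _ jD (ltr0_neq0 wa)) (cval_eps _ jD (lt0r_neq0 wb)).
rewrite gtr0_norm // ltr0_norm //.
set ea := epsc D j a y; set eb := epsc D j b y.
have -> : cw b j * (cw a j * (y j - ea)) + - cw a j * (cw b j * (y j - eb)) =
  (- cw a j * cw b j) * (ea - eb) by ring.
have wab : 0 < - cw a j * cw b j by rewrite mulr_gt0 // oppr_gt0.
by rewrite pmulr_rgt0 // pmulr_rge0 // subr_gt0 subr_ge0.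
Qed.

Lemma sat_elim j G y : all (sat D y) G -> all (sat D y) (elim j G).
Proof.
move=> Gy; rewrite /elim all_cat all_allpairs; apply/andP; split.
  by rewrite all_filter; apply: sub_all Gy => phi /= ->; rewrite implybT.
rewrite /allrel all_filter; apply: sub_all (Gy) => a /= ya; apply/implyP => wa.
by rewrite all_filter; apply: sub_all Gy => b /= yb; apply/implyP => wb; apply: sat_red.
Qed.

Definition lowers j y G := [seq (epsc D j phi y, cstrict phi) | phi <- posj j G].
Definition uppers j y G := [seq (epsc D j phi y, cstrict phi) | phi <- negj j G].

Lemma elim_bounds_compat j G y : (1 <= j <= D)%N -> all (sat D y) (elim j G) ->
  allrel bound_compat (lowers j y G) (uppers j y G).
Proof.
move=> jD; rewrite /elim all_cat all_allpairs => /andP[_ Hred].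
rewrite /lowers /uppers allrel_mapl allrel_mapr allrelC.
apply: (sub_in_allrel (P := fun a => cw a j < 0) (Q := fun b => 0 < cw b j)) Hred.
- by move=> a b wa wb; apply: red_bound_compat.
- exact: filter_all.
- exact: filter_all.
Qed.

Lemma sat_update j G y y' : (1 <= j <= D)%N -> (forall k, k != j -> y' k = y k) ->
  all (sat D y) [seq phi <- G | cw phi j == 0] ->
  all (respects_lo^~ (y' j)) (lowers j y G) -> all (respects_up^~ (y' j)) (uppers j y G) ->
  all (sat D y') G.
Proof.
move=> jD yy'; rewrite /lowers /uppers !all_map !all_filter => H0 Hlo Hup.
move: (introT and3P (And3 H0 Hlo Hup)) => {H0 Hlo Hup}; rewrite -!all_predI.
apply: sub_all => phi /and3P[/implyP s0 /implyP slo /implyP sup].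
have eps_eq : epsc D j phi y' = epsc D j phi y by apply: epsc_ext.
case: (ltgtP (cw phi j) 0) => wj.
- by rewrite (sat_neg_weight _ jD wj) eps_eq; exact: sup.
- by rewrite (sat_pos_weight _ jD wj) eps_eq; exact: slo.
have cval_eq : cval D phi y' = cval D phi y.
  rewrite /cval; congr (_ + _); apply: eq_bigr => k _.
  by case: (eqVneq k j) => [->|/yy' ->]; rewrite ?wj ?mul0r.
by rewrite /sat cval_eq; apply/s0/eqP.
Qed.

End Constraints.

Section Elimination.
Variables (R : realFieldType) (D : nat) (Pi : seq (constr R)).

Definition vanishes_above i (phi : constr R) :=
  all (fun k => cw phi k == 0) (index_iota i.+1 D.+1).

Lemma vanishes_aboveP i phi :
  reflect (forall k, (i < k <= D)%N -> cw phi k = 0) (vanishes_above i phi).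
Proof.
apply: (iffP allP) => vanish k; rewrite ?mem_index_iota => ik.
  by apply/eqP/vanish; rewrite mem_index_iota; lia.
by apply/eqP/vanish; lia.
Qed.

Lemma PiAux_vanishes m : all (vanishes_above (D - m)%N) (PiAux D Pi m).
Proof.
elim: m => [|m IH] /=.
  by rewrite subn0 /vanishes_above /index_iota subnn; apply/all_predT.
rewrite /elim all_cat all_allpairs; apply/andP; split.
  rewrite all_filter; apply: sub_all IH => phi /= /vanishes_aboveP vanish.
  apply/implyP => /eqP w0; apply/vanishes_aboveP => k kD.
  by case: (eqVneq k (D - m)%N) => [->//|ne]; apply: vanish; lia.
rewrite /allrel all_filter; apply: sub_all (IH) => a /= /vanishes_aboveP va.
apply/implyP => _; rewrite all_filter; apply: sub_all IH => b /= /vanishes_aboveP vb.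
apply/implyP => _; apply/vanishes_aboveP => k kD /=.
by case: eqP => // ne; rewrite (va k) ?(vb k) ?mul0r ?addr0 //; lia.
Qed.

Lemma sat_vanishes phi x y : vanishes_above 0 phi -> sat D x phi = sat D y phi.
Proof.
move=> /vanishes_aboveP vanish.
have cval_cb z : cval D phi z = cb phi.
  rewrite /cval big_nat big1 ?add0r // => k kD.
  by rewrite vanish ?mul0r //; lia.
by rewrite /sat !cval_cb.
Qed.

Lemma sat_PiAux x m : all (sat D x) Pi -> all (sat D x) (PiAux D Pi m).
Proof. by move=> Pix; elim: m => //= m; exact: sat_elim. Qed.

Lemma satisfiable_PiI0 y : satisfiable D Pi -> all (sat D y) (PiI D Pi 0).
Proof.
move=> [x Pix]; rewrite /PiI subn0.
have := introT andP (conj (sat_PiAux D Pix) (PiAux_vanishes D)); rewrite subnn -all_predI.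
by apply: sub_all => phi /andP[xphi /(sat_vanishes y x) ->].
Qed.

Lemma PiI_step n : (n < D)%N -> PiI D Pi n = elim n.+1 (PiI D Pi n.+1).
Proof.
move=> nD; rewrite /PiI.
have -> : (D - n = (D - n.+1).+1)%N by lia.
by rewrite /= subKn.
Qed.

Lemma PiI_bounds_compat n y : (n < D)%N -> all (sat D y) (PiI D Pi n) ->
  allrel bound_compat (lowers D n.+1 y (PiI D Pi n.+1)) (uppers D n.+1 y (PiI D Pi n.+1)).
Proof. by move=> nD; rewrite PiI_step //; apply: elim_bounds_compat; lia. Qed.

Lemma lbI_lbound i y : lbI D Pi i y = lbound (lowers D i y (PiI D Pi i)).
Proof. by rewrite /lbI /lbound big_map. Qed.

Lemma ubI_ubound i y : ubI D Pi i y = ubound (uppers D i y (PiI D Pi i)).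
Proof. by rewrite /ubI /ubound big_map. Qed.

Lemma maxI_clamp i y e a : maxI D Pi i y e a = clamp_lo (lowers D i y (PiI D Pi i)) e a.
Proof.
rewrite /maxI /clamp_lo -lbI_lbound -has_pred1 has_map; congr (if _ then _ else _).
by apply: eq_has => phi /=; rewrite xpair_eqE eqb_id andbC eq_sym.
Qed.

Lemma minI_clamp i y e a : minI D Pi i y e a = clamp_up (uppers D i y (PiI D Pi i)) e a.
Proof.
rewrite /minI /clamp_up -ubI_ubound -has_pred1 has_map; congr (if _ then _ else _).
by apply: eq_has => phi /=; rewrite xpair_eqE eqb_id andbC eq_sym.
Qed.

End Elimination.

Section ConstraintLayer.
Variables (R : realFieldType) (D : nat) (Pi : seq (constr R)) (xt epsL epsU : nat -> R).
Local Notation p := (clpre D Pi xt epsL epsU).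
Local Notation lo n := (lowers D n.+1 (p n) (PiI D Pi n.+1)).
Local Notation up n := (uppers D n.+1 (p n) (PiI D Pi n.+1)).

Lemma clpre_stable m k : (k <= m)%N -> p m k = p k k.
Proof.
elim: m => [|m IH] km; first by move: km; rewrite leqn0 => /eqP ->.
rewrite /=; case: eqVneq => [->|ne]; first by rewrite /= eqxx.
rewrite IH //; lia.
Qed.

Lemma clpre_coord n :
  p n.+1 n.+1 = clamp_up (up n) (epsU n.+1) (clamp_lo (lo n) (epsL n.+1) (xt n.+1)).
Proof. by rewrite /= eqxx maxI_clamp minI_clamp. Qed.

Hypothesis eps_admissible : eps_ok D Pi xt epsL epsU.

Lemma eps_ok_at n : (n < D)%N ->
  [/\ 0 < epsL n.+1, 0 < epsU n.+1 & eps_fit (lo n) (up n) (epsL n.+1) (epsU n.+1)].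
Proof.
move=> nD; have [] := eps_admissible (i := n.+1) _; first lia.
by rewrite /eps_fit /= !lbI_lbound !ubI_ubound => eL [eU fit].
Qed.

Lemma clpre_sat n : satisfiable D Pi -> (n <= D)%N -> all (sat D (p n)) (PiI D Pi n).
Proof.
move=> Pisat; elim: n => [_|n IH nD]; first exact: satisfiable_PiI0.
have {}IH := IH (ltnW nD).
have compat := PiI_bounds_compat nD IH.
have [eL eU fit] := eps_ok_at nD.
apply: (sat_update (j := n.+1) (y := p n)).
- lia.
- by move=> k /negbTE /= ->.
- by move: IH; rewrite PiI_step // /elim all_cat => /andP[].
- (* commuting the clamps makes [clamp_lo] the outer one *)
  by rewrite clpre_coord clamp_commute //; exact: clamp_lo_respects.
- by rewrite clpre_coord; exact: clamp_up_respects.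
Qed.

End ConstraintLayer.

Theorem corollary1 (R : realFieldType) (D : nat) (Pi : seq (constr R)) :
  satisfiable D Pi ->
  forall (xt : nat -> R) (epsL epsU : nat -> R),
    eps_ok D Pi xt epsL epsU ->
    forall i : nat, (1 <= i <= D)%N ->
      let p := clpre D Pi xt epsL epsU i.-1 in
      (lbI D Pi i p <= ubI D Pi i p)%E /\
      CL D Pi xt epsL epsU i
        = minI D Pi i p (epsU i) (maxI D Pi i p (epsL i) (xt i)) /\
      CL D Pi xt epsL epsU i
        = maxI D Pi i p (epsL i) (minI D Pi i p (epsU i) (xt i)).
Proof.
move=> Pisat xt epsL epsU ok [//|n] /andP[_ nD] p.
have compat := PiI_bounds_compat nD (clpre_sat ok Pisat (ltnW nD)).
have [_ _ fit] := eps_ok_at ok nD.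
rewrite /CL clpre_stable // clpre_coord lbI_lbound ubI_ubound !maxI_clamp !minI_clamp.
split; first exact: lbound_le_ubound.
by split=> //; exact: clamp_commute.
Qed.
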